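(* Let Assumptions (A1), (A3) and (A4) below hold and let $\alpha\in\mathcal K_\infty$. Then there exist $\delta\in\mathcal L$ and $N_0\in\mathbb{N}$ such that for all $x\in\mathbb{X}_{\alpha,N_0}$ and all $N\ge N_0$: $$V_{N+1}^\beta(x)\le\tfrac{N}{N+1}V_N^\beta(x)+\ell^\star+\delta(N+1),$$ and, with $x_1=x_{\mu_N^\beta}(1,x)=f(x,\mu_N^\beta(x))$, $$V_N^\beta(x_1)\le V_N^\beta(x)+\tfrac{N+1}{N}\big(\ell^\star-\ell(x,\mu_N^\beta(x))+\delta(N+1)\big).$$
   Context: System $x(k+1)=f(x(k),u(k))$ with constraint sets $\mathbb{X}\subset\mathbb{R}^n$, $\mathbb{U}\subset\mathbb{R}^m$ and stage cost $\ell:\mathbb{X}\times\mathbb{U}\to\mathbb{R}$, which is assumed non-negative. For $u\in\mathbb{U}^T$, $x_u(0,x)=x$, $x_u(k+1,x)=f(x_u(k,x),u(k))$; $\mathbb{U}^T(x)$ is the set of $u\in\mathbb{U}^T$ with $x_u(k,x)\in\mathbb{X}$ for $k=0,\dots,T$. A feasible $p$-periodic orbit is $\Pi\in(\mathbb{X}\times\mathbb{U})^p$ with $\Pi_\mathbb{X}([k+1]_p)=f(\Pi(k))$ ($[k]_p$ = $k$ mod $p$); $\|(x,u)\|_\Pi:=\min_k\|(x,u)-\Pi(k)\|$, $\|x\|_{\Pi_\mathbb{X}}:=\min_k\|x-\Pi_\mathbb{X}(k)\|$; $\ell^\star:=\inf$ over all feasible periodic orbits of $\frac1p\sum_{k=0}^{p-1}\ell(\Pi(k))$;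 $\Pi^\star$ is a fixed feasible $p^\star$-periodic orbit attaining $\ell^\star$. $\mathcal L$: continuous decreasing functions $[0,\infty)\to[0,\infty)$ tending to $0$. (A1) $f,\ell$ continuous, $\mathbb{X},\mathbb{U}$ compact. (A3) There are $\lambda:\mathbb{X}\to\mathbb{R}$, $\bar\lambda$ with $|\lambda|\le\bar\lambda$ on $\mathbb{X}$, and $\underline\alpha_{\tilde\ell}\in\mathcal K_\infty$ with $\ell(x,u)-\ell^\star+\lambda(x)-\lambda(f(x,u))\ge\underline\alpha_{\tilde\ell}(\|(x,u)\|_{\Pi^\star})$ for all $x\in\mathbb{X}$, $u\in\mathbb{U}^1(x)$. (A4) There are $\kappa>0$, $M'\in\mathbb{N}$, $\rho\in\mathcal K_\infty$ such that for all $z\in\{\Pi^\star_\mathbb{X}(k)\}$ and $x,y\in\mathbb{X}$ with $\|x-z\|,\|y-z\|\le\kappa$ there is $u\in\mathbb{U}^{M'}(x)$ with $x_u(M',x)=y$ and $\|(x_u(k,x),u(k))\|_{\Pi^\star}\le\rho(\max\{\|x\|_{\Pi^\star_\mathbb{X}},\|y\|_{\Pi^\star_\mathbb{X}}\})$ for $k=0,\dots,M'-1$. Discounted MPC: $\beta_N(k)=\frac{N-k}{N}$, $J_N^\beta(x,u)=\sum_{k=0}^{N-1}\beta_N(k)\ell(x_u(k,x),u(k))$, $V_N^\beta(x)=\inf_{u\in\mathbb{U}^N(x)}J_N^\beta(x,u)$, $u^\beta_{N,x}$ a minimizer, $\mu_N^\beta(x)=u^\beta_{N,x}(0)$. Weak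 turnpike: $Q^\beta_\varepsilon(N,x)$ is the number of $k\in\{0,\dots,N-1\}$ with $\|(x_{u^\beta_{N,x}}(k,x),u^\beta_{N,x}(k))\|_{\Pi^\star}\le\varepsilon$; $\mathbb{X}_{\alpha,N_0}$ is the set of $x\in\mathbb{X}$ with $Q^\beta_\varepsilon(N,x)\ge N-\sqrt N/\alpha(\varepsilon)$ for all $N\ge N_0$, $\varepsilon>0$. *)

From HB Require Import structures.
From mathcomp Require Import all_boot all_order all_algebra.
From mathcomp Require Import all_classical all_reals all_analysis.
Set Implicit Arguments. Unset Strict Implicit. Unset Printing Implicit Defensive.
Import Order.TTheory GRing.Theory Num.Theory.
Import numFieldNormedType.Exports.
Local Open Scope classical_set_scope.
Local Open Scope ring_scope.

Section Defs.
Variables (R : realType) (n m : nat).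
Notation st := 'rV[R]_n.
Notation inp := 'rV[R]_m.

Definition pnorm (z : st * inp) : R := Num.max `|z.1| `|z.2|.

Definition Kinf (a : R -> R) : Prop :=
  {within [set s : R | 0 <= s], continuous a} /\ a 0 = 0 /\
  (forall s t, 0 <= s -> s < t -> a s < a t) /\
  (forall M, exists s, 0 <= s /\ M < a s).

Definition Lclass (d : R -> R) : Prop :=
  {within [set s : R | 0 <= s], continuous d} /\
  (forall s, 0 <= s -> 0 <= d s) /\
  (forall s t, 0 <= s -> s < t -> d t < d s) /\
  (d x @[x --> +oo] --> 0).

Variables (f : st -> inp -> st) (ell : st -> inp -> R)
          (Xs : set st) (Us : set inp).

Fixpoint traj (x : st) (u : nat -> inp) (k : nat) : st :=
  if k is k'.+1 then f (traj x u k') (u k') else x.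

Definition Feas (T : nat) (x : st) : set (nat -> inp) :=
  [set u | (forall k, (k < T)%N -> Us (u k)) /\
           (forall k, (k <= T)%N -> Xs (traj x u k))].

(* feasible p-periodic orbit, indices taken mod p (only k < p matter) *)
Definition periodic_orbit (p : nat) (Pi : nat -> st * inp) : Prop :=
  (0 < p)%N /\
  (forall k, (k < p)%N -> Xs (Pi k).1 /\ Us (Pi k).2) /\
  (forall k, (k < p)%N -> (Pi ((k.+1) %% p)%N).1 = f (Pi k).1 (Pi k).2).

Definition avg_cost (p : nat) (Pi : nat -> st * inp) : R :=
  p%:R^-1 * \sum_(k < p) ell (Pi k).1 (Pi k).2.

Definition ell_star : R :=
  inf [set r | exists p Pi, periodic_orbit p Pi /\ r = avg_cost p Pi].

Definition dist_orbit (p : nat) (Pi : nat -> st * inp) (z : st * inp) : R :=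
  \big[Order.min/pnorm (z.1 - (Pi 0%N).1, z.2 - (Pi 0%N).2)]_(k < p)
     pnorm (z.1 - (Pi k).1, z.2 - (Pi k).2).

Definition dist_orbitX (p : nat) (Pi : nat -> st * inp) (x : st) : R :=
  \big[Order.min/`|x - (Pi 0%N).1|]_(k < p) `|x - (Pi k).1|.

Definition A1 : Prop :=
  {within Xs `*` Us, continuous (fun z : st * inp => f z.1 z.2)} /\
  {within Xs `*` Us, continuous (fun z : st * inp => ell z.1 z.2)} /\
  compact Xs /\ compact Us.

Definition A3 (ps : nat) (Pis : nat -> st * inp) : Prop :=
  exists (lam : st -> R) (lambar : R) (al : R -> R),
    (forall x, Xs x -> `|lam x| <= lambar) /\ Kinf al /\
    (forall x u, Xs x -> Us u -> Xs (f x u) ->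
       ell x u - ell_star + lam x - lam (f x u) >= al (dist_orbit ps Pis (x, u))).

Definition A4 (ps : nat) (Pis : nat -> st * inp) : Prop :=
  exists (kappa : R) (M' : nat) (rho : R -> R),
    0 < kappa /\ Kinf rho /\
    forall k x y, (k < ps)%N -> Xs x -> Xs y ->
      `|x - (Pis k).1| <= kappa -> `|y - (Pis k).1| <= kappa ->
      exists u, Feas M' x u /\ traj x u M' = y /\
        forall j, (j < M')%N ->
          dist_orbit ps Pis (traj x u j, u j) <=
            rho (Num.max (dist_orbitX ps Pis x) (dist_orbitX ps Pis y)).

Definition beta (N k : nat) : R := (N - k)%:R / N%:R.

Definition Jbeta (N : nat) (x : st) (u : nat -> inp) : R :=
  \sum_(k < N) beta N k * ell (traj x u k) (u k).

Definition Vbeta (N : nat) (x : st) : \bar R :=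
  ereal_inf [set (Jbeta N x u)%:E | u in Feas N x].

Definition is_minimizer_selection (umin : nat -> st -> nat -> inp) : Prop :=
  forall N x, Feas N x !=set0 ->
    Feas N x (umin N x) /\ (Jbeta N x (umin N x))%:E = Vbeta N x.

Definition Qcount (ps : nat) (Pis : nat -> st * inp)
    (umin : nat -> st -> nat -> inp) (eps : R) (N : nat) (x : st) : nat :=
  count (fun k => dist_orbit ps Pis (traj x (umin N x) k, umin N x k) <= eps)
        (iota 0 N).

(* X_{alpha,N0}; membership includes existence of feasible (hence optimal)
   controls for every horizon N >= N0 *)
Definition Xturn (ps : nat) (Pis : nat -> st * inp)
    (umin : nat -> st -> nat -> inp) (alpha : R -> R) (N0 : nat) : set st :=
  [set x | Xs x /\ forall N, (N0 <= N)%N ->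
     Feas N x !=set0 /\
     forall eps, 0 < eps ->
       (Qcount ps Pis umin eps N x)%:R >= N%:R - Num.sqrt N%:R / alpha eps].

End Defs.

(* Write [rc x u := ell x u - ell_star + lam x - lam (f x u)] for the rotated cost. By
   dissipativity (A3) it is nonnegative, and it vanishes along the optimal orbit Pi*, whose
   rotated costs are nonnegative and sum to zero around the cycle. Up to boundary values of the
   bounded storage function [lam], the weighted cost [N * J_N] of a control is therefore
   [ell_star] times the sum of the weights plus the weighted sum of its rotated costs.
   For [x] in the turnpike set, the optimal trajectory of horizon [N] is [kappa]-close to Pi*
   at some time [k1 <= sqrt N / alpha kappa] and at some time [k0 >= N - sqrt N / alpha kappa - 1].
   Steering to Pi* at [k1] in [M'] steps (A4) and then following it is feasible, so by
   optimality the weighted rotated cost after [k1] is O(N), and the plain sum of the rotated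
   costs is O(sqrt N). Steering to Pi* at [k0] and following it one step further gives a control
   of horizon [N + 1] whose weighted cost exceeds [N * V_N x] by at most
   [(N + 1) ell_star + O(sqrt N)]; dividing by [N + 1] gives the first estimate with
   [delta y = C / (1 + sqrt y)], and dropping its first step gives the second. *)

From HB Require Import structures.
From mathcomp Require Import all_boot all_order all_algebra.
From mathcomp Require Import all_classical all_reals all_analysis.
From mathcomp Require Import zify ring lra.
Set Implicit Arguments. Unset Strict Implicit. Unset Printing Implicit Defensive.
Import Order.TTheory GRing.Theory Num.Theory.
Import numFieldNormedType.Exports.
Local Open Scope classical_set_scope.
Local Open Scope ring_scope.

Section WeightedSums.
Variable R : realFieldType.

Lemma sum_weight_succ (h : nat -> R) k H : (k <= H)%N ->
  \sum_(k <= t < H.+1) (H.+1 - t)%:R * h t =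
  \sum_(k <= t < H) (H - t)%:R * h t + \sum_(k <= t < H.+1) h t.
Proof.
move=> kH; rewrite big_nat_recr //= [in RHS]big_nat_recr //= subSnn mul1r.
rewrite addrA -big_split /=; congr (_ + _).
apply: eq_big_nat => t /andP[_ tH].
by rewrite subSn ?(ltnW tH) // -addn1 natrD mulrDl mul1r.
Qed.

(* Abel summation: the weighted sum telescopes to [\sum_(k < t <= H) g t - (H - k) g k]. *)
Lemma weighted_telescope_norm_le (g : nat -> R) (L : R) k H : (k <= H)%N ->
  (forall t, (k <= t <= H)%N -> `|g t| <= L) ->
  `|\sum_(k <= t < H) (H - t)%:R * (g t.+1 - g t)| <= (H - k)%:R * (2 * L).
Proof.
elim: H => [|H IH] kH hg; first by rewrite big_geq // normr0 sub0n mul0r.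
case: (ltngtP k H.+1) kH => // [|<- _]; last first.
  by rewrite big_geq // normr0 subnn mul0r.
rewrite ltnS => kH _.
rewrite sum_weight_succ // telescope_sumr ?(leqW kH) // subSn // mulrSr mulrDl mul1r.
apply: (le_trans (ler_normD _ _)); apply: lerD.
  by apply: IH => // t /andP[kt tH]; apply: hg; rewrite kt leqW.
apply: (le_trans (ler_normB _ _)); rewrite mulr_natl mulr2n.
by apply: lerD; apply: hg; rewrite leqnn ?andbT leqW.
Qed.

Lemma sum_nat_le_prefix (F : nat -> R) a b s : (forall t, 0 <= F t) ->
  (b <= s)%N -> \sum_(a <= t < b) F t <= \sum_(0 <= t < s) F t.
Proof.
move=> F0 bs; have [ab|ba] := leqP a b; last by rewrite big_geq ?sumr_ge0 // ltnW.
rewrite (big_cat_nat (leq0n a) (leq_trans ab bs)) /= (big_cat_nat ab bs) /=.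
by rewrite addrCA lerDl addr_ge0 ?sumr_ge0.
Qed.

Lemma sum_window_le (B : R) a b c M : 0 <= B ->
  \sum_(a <= t < b) (if (c <= t < c + M)%N then B else 0) <= M%:R * B.
Proof.
move=> B0; apply: (le_trans (@sum_nat_le_prefix _ a b (b + (c + M)) _ _)).
- by move=> t; case: ifP.
- exact: leq_addr.
rewrite (big_cat_nat (leq0n c) (leq_trans (leq_addr M c) (leq_addl _ _))) /=.
rewrite (big_cat_nat (leq_addr M c) (leq_addl _ _)) /=.
rewrite (eq_big_nat _ _ (F2 := fun=> 0)) => [|i /andP[_ ic]]; last by rewrite leqNgt ic.
rewrite [X in _ + (_ + X)](eq_big_nat _ _ (F2 := fun=> 0)) => [|i /andP[ci _]]; last first.
  by rewrite ltnNge ci andbF.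
rewrite [X in _ + (X + _)](eq_big_nat _ _ (F2 := fun=> B)) => [|i ->//].
by rewrite !sumr_const_nat !mul0rn add0r addr0 addKn mulr_natl.
Qed.

Lemma weighted_window_sum_le (g : nat -> R) (B : R) k M H : 0 <= B ->
  (forall t, (k <= t < H)%N -> g t <= if (k <= t < k + M)%N then B else 0) ->
  \sum_(k <= t < H) (H - t)%:R * g t <= (H - k)%:R * (M%:R * B).
Proof.
move=> B0 hg; pose w t := if (k <= t < k + M)%N then B else 0.
apply: le_trans (_ : \sum_(k <= t < H) (H - k)%:R * w t <= _); last first.
  by rewrite -mulr_sumr ler_wpM2l ?ler0n ?sum_window_le.
apply: ler_sum_nat => t /andP[kt tH]; have w0 : 0 <= w t by rewrite /w; case: ifP.
apply: le_trans (_ : (H - t)%:R * w t <= _).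
  by rewrite ler_wpM2l ?ler0n ?hg ?kt.
by rewrite ler_wpM2r // ler_nat leq_sub2l.
Qed.

(* Terms of weight at least [q + 1] are bounded via the weighted sum, the last [q] by [B]. *)
Lemma sum_le_of_weighted_tail_le (a : nat -> R) (B W : R) k q N :
  (k <= N)%N -> (q <= N)%N -> 0 <= B -> (forall t, (t < N)%N -> 0 <= a t <= B) ->
  \sum_(k <= t < N) (N - t)%:R * a t <= W ->
  \sum_(0 <= t < N) a t <= k%:R * B + W / q.+1%:R + q%:R * B.
Proof.
move=> kN qN B0 ha hW; rewrite (big_cat_nat (leq0n k) kN) /= -addrA.
apply: lerD.
  apply: le_trans (_ : \sum_(0 <= t < k) B <= _).
    by apply: ler_sum_nat => t /andP[_ tk]; case/andP: (ha t (leq_trans tk kN)).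
  by rewrite sumr_const_nat subn0 mulr_natl.
have q1 : 0 < q.+1%:R :> R by rewrite ltr0n.
pose w t := if (N - q <= t < N - q + q)%N then B else 0.
apply: le_trans (_ : \sum_(k <= t < N) ((N - t)%:R * a t / q.+1%:R + w t) <= _).
  apply: ler_sum_nat => t /andP[kt tN]; have /andP[a0 aB] := ha t tN.
  rewrite /w subnK // tN andbT; case: leqP => tq.
    by apply: (le_trans aB); rewrite lerDr divr_ge0 // ?mulr_ge0 // ltW.
  rewrite addr0 ler_pdivlMr // mulrC ler_wpM2r // ler_nat; lia.
rewrite big_split /= -mulr_suml lerD //; first by rewrite ler_wpM2r // invr_ge0 ltW.
exact: sum_window_le.
Qed.

End WeightedSums.

Lemma sum_le_of_weighted_tail_le_sqrt (R : realType) (a : nat -> R) (B P : R) k N :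
  (k <= N)%N -> 0 <= B -> 0 <= P -> (forall t, (t < N)%N -> 0 <= a t <= B) ->
  \sum_(k <= t < N) (N - t)%:R * a t <= N%:R * P ->
  \sum_(0 <= t < N) a t <= k%:R * B + Num.sqrt N%:R * (P + B).
Proof.
move=> kN B0 P0 ha hW; set r := Num.sqrt (N%:R : R); set q := Num.truncn r.
have r0 : 0 <= r := sqrtr_ge0 _.
have /andP[qr rq] := truncn_itv r0; rewrite -/q in qr rq.
have Nr : N%:R = r * r by rewrite -expr2 sqr_sqrtr ?ler0n.
have qN : (q <= N)%N.
  have : (q * q <= N)%N by rewrite -(ler_nat R) natrM Nr; have := ler0n R q; nra.
  nia.
apply: (le_trans (sum_le_of_weighted_tail_le kN qN B0 ha hW)).
rewrite -addrA lerD2l mulrDr lerD ?ler_wpM2r //.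
have rP : 0 <= r * P := mulr_ge0 r0 P0.
rewrite ler_pdivrMr ?ltr0n // Nr; nra.
Qed.

Lemma count_iota_first (P : pred nat) a N : (0 < count P (iota a N))%N ->
  exists j, [/\ (a <= j < a + N)%N, P j & (count P (iota a N) <= a + N - j)%N].
Proof.
elim: N a => [|N IH] a //=; case Pa: (P a) => /= cP.
  exists a; split => //; first lia.
  by have := count_size P (iota a.+1 N); rewrite size_iota; lia.
have [j [jN Pj cj]] := IH a.+1 cP.
by exists j; split => //; lia.
Qed.

Lemma count_iota_last (P : pred nat) a N : (0 < count P (iota a N))%N ->
  exists j, [/\ (a <= j < a + N)%N, P j & (count P (iota a N) <= j.+1 - a)%N].
Proof.
elim: N a => [|N IH] a //=; case Pa: (P a) => /= cP; last first.
  by have [j [jN Pj cj]] := IH a.+1 cP; exists j; split => //; lia.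
have [c0|cpos] := posnP (count P (iota a.+1 N)).
  by exists a; split => //; lia.
by have [j [jN Pj cj]] := IH a.+1 cpos; exists j; split => //; lia.
Qed.

Lemma count_iota_extremes (R : realFieldType) (P : pred nat) N (b : R) :
  N%:R - b <= (count P (iota 0 N))%:R -> b + 2 <= N%:R ->
  (exists k1, [/\ (k1 < N)%N, P k1 & k1%:R <= b]) /\
  (exists k0, [/\ (0 < k0 < N)%N, P k0 & N%:R <= k0%:R + 1 + b]).
Proof.
move=> cN bN; have c2 : (2 <= count P (iota 0 N))%N by rewrite -(ler_nat R); lra.
have c0 : (0 < count P (iota 0 N))%N by apply: leq_trans c2.
split.
  have [j [/andP[_ jN] Pj cj]] := count_iota_first c0; exists j; split=> //.
  by move: cj; rewrite add0n -(ler_nat R) natrB ?(ltnW jN); lra.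
have [j [/andP[_ jN] Pj cj]] := count_iota_last c0; exists j; split=> //.
  by rewrite jN andbT; move: cj c2; rewrite subn0; lia.
by move: cj; rewrite subn0 -(ler_nat R) -natr1; lra.
Qed.

Lemma sum_ord_modS (V : nmodType) (g : nat -> V) p : (0 < p)%N ->
  \sum_(j < p) g (j.+1 %% p)%N = \sum_(j < p) g j.
Proof.
case: p => // p _; rewrite big_ord_recr big_ord_recl /= modnn addrC; congr (_ + _).
by apply: eq_bigr => j _; rewrite modn_small // ltnS.
Qed.

Lemma Kinf_ge0 (R : realType) (a : R -> R) s : Kinf a -> 0 <= s -> 0 <= a s.
Proof.
case=> _ [a0 [aup _]]; rewrite le_eqVlt => /predU1P[<-|s0]; first by rewrite a0.
by rewrite -a0 ltW // aup.
Qed.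

Lemma Kinf_gt0 (R : realType) (a : R -> R) s : Kinf a -> 0 < s -> 0 < a s.
Proof. by case=> _ [a0 [aup _]] s0; rewrite -a0 aup. Qed.

Definition sqrt_decay (R : realType) (c y : R) := c / (1 + Num.sqrt y).

Lemma sqrt_decay_Lclass (R : realType) (c : R) : 0 < c -> Lclass (sqrt_decay c).
Proof.
move=> c0; have den_gt0 (y : R) : 0 < 1 + Num.sqrt y by rewrite ltr_pwDl ?sqrtr_ge0.
split; [|split; [|split]].
- apply: continuous_subspaceT => y; apply: cvgM; first exact: cvg_cst.
  apply: cvgV; first by rewrite gt_eqF.
  by apply: cvgD; [exact: cvg_cst | exact: sqrt_continuous].
- by move=> s _; rewrite divr_ge0 ?ltW.
- move=> s t s0 st; rewrite ltr_pM2l // ltf_pV2 ?posrE // ltrD2l.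
  by rewrite ltr_sqrt // (le_lt_trans s0 st).
apply/cvgr0Pnorm_lt => e e0; near=> y.
have ce0 : 0 <= c / e by rewrite divr_ge0 ?ltW.
have ce_y : (c / e) ^+ 2 < y by near: y; apply: nbhs_pinfty_gt; exact: num_real.
have ce_sqrt : c / e < Num.sqrt y.
  by rewrite -(ger0_norm ce0) -sqrtr_sqr ltr_sqrt // (le_lt_trans _ ce_y) ?sqr_ge0.
rewrite ger0_norm ?divr_ge0 ?ltW // ltr_pdivrMr //.
move: ce_sqrt; rewrite ltr_pdivrMr // => ce_sqrt.
by rewrite mulrDr mulr1 (lt_trans ce_sqrt) // mulrC ltrDr.
Unshelve. all: by end_near.
Qed.

(* [(1 + sqrt N) (1 + sqrt (N + 1)) <= 4 (N + 1)] *)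
Lemma sqrt_decay_succ (R : realType) (c : R) N : 0 <= c ->
  (1 + Num.sqrt N%:R) * c <= N.+1%:R * sqrt_decay (4 * c) N.+1%:R.
Proof.
move=> c0; rewrite /sqrt_decay; set r := Num.sqrt (N%:R : R); set r' := Num.sqrt _.
have r0 : 0 <= r := sqrtr_ge0 _.
have r'1 : 1 <= r' by rewrite -sqrtr1 ler_wsqrtr // ler1n.
have rr' : r <= r' by rewrite ler_wsqrtr // ler_nat.
have NS : N.+1%:R = r' * r' by rewrite -expr2 sqr_sqrtr ?ler0n.
rewrite mulrA ler_pdivlMr ?ltr_pwDl ?sqrtr_ge0 //.
have : (1 + r) * (1 + r') <= 4 * (r' * r') by nra.
rewrite NS; nra.
Qed.

Section Trajectories.
Variables (R : realType) (n m : nat) (f : 'rV[R]_n -> 'rV[R]_m -> 'rV[R]_n).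
Variables (Xs : set 'rV[R]_n) (Us : set 'rV[R]_m).

Lemma eq_traj x v v' j : (forall t, (t < j)%N -> v t = v' t) ->
  traj f x v j = traj f x v' j.
Proof.
elim: j => [//|j IH] vv' /=.
by rewrite IH ?vv' // => t tj; apply: vv'; apply: ltnW.
Qed.

Lemma traj_addn x v k j :
  traj f x v (k + j) = traj f (traj f x v k) (fun t => v (k + t)%N) j.
Proof. by elim: j => [|j IH]; rewrite ?addn0 //= addnS /= IH. Qed.

Lemma trajS x v t : traj f x v t.+1 = traj f (f x (v 0%N)) (fun s => v s.+1) t.
Proof. by elim: t => [//|t IH]; rewrite /= -IH. Qed.

Lemma Feas_behead N x v : Feas f Xs Us N.+1 x v ->
  Feas f Xs Us N (f x (v 0%N)) (fun t => v t.+1).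
Proof. by case=> vU vX; split=> t tN; [exact: vU | rewrite -trajS; exact: vX]. Qed.

Lemma traj_periodic_orbit p Pi i j : periodic_orbit f Xs Us p Pi -> (i < p)%N ->
  traj f (Pi i).1 (fun t => (Pi ((i + t) %% p)%N).2) j = (Pi ((i + j) %% p)%N).1.
Proof.
case=> p0 [_ PiS] ip; elim: j => [|j IH] /=; first by rewrite addn0 modn_small.
rewrite IH -PiS ?ltn_mod //; congr (Pi _).1.
by rewrite -addn1 modnDml addn1 addnS.
Qed.

Definition splice (v r : nat -> 'rV[R]_m) k M (Pi : nat -> 'rV[R]_n * 'rV[R]_m) p i :
    nat -> 'rV[R]_m := fun t =>
  if (t < k)%N then v t else if (t < k + M)%N then r (t - k)%N
  else (Pi ((i + (t - (k + M))) %% p)%N).2.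

Section Splice.
Variables (v r : nat -> 'rV[R]_m) (k M : nat) (Pi : nat -> 'rV[R]_n * 'rV[R]_m) (p i : nat).
Let z := splice v r k M Pi p i.

Lemma traj_splice_head x t : (t <= k)%N -> traj f x z t = traj f x v t.
Proof.
by move=> tk; apply: eq_traj => s st; rewrite /z /splice (leq_trans st tk).
Qed.

Lemma traj_splice_mid x j : (j <= M)%N ->
  traj f x z (k + j) = traj f (traj f x v k) r j.
Proof.
move=> jM; rewrite traj_addn traj_splice_head //; apply: eq_traj => s sj.
by rewrite /z /splice ltnNge leq_addr /= ltn_add2l (leq_trans sj jM) addKn.
Qed.

Lemma traj_splice_orbit x j : periodic_orbit f Xs Us p Pi -> (i < p)%N ->
  traj f (traj f x v k) r M = (Pi i).1 ->
  traj f x z (k + M + j) = (Pi ((i + j) %% p)%N).1.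
Proof.
move=> PO ip rM; rewrite traj_addn traj_splice_mid // rM.
rewrite -(traj_periodic_orbit j PO ip); apply: eq_traj => s _.
by rewrite /z /splice -addnA ltnNge leq_addr /= addnA ltnNge leq_addr /= addKn.
Qed.

End Splice.
End Trajectories.

Section RotatedCost.
Variables (R : realType) (n m : nat).
Variables (f : 'rV[R]_n -> 'rV[R]_m -> 'rV[R]_n) (ell : 'rV[R]_n -> 'rV[R]_m -> R).
Variables (lam : 'rV[R]_n -> R) (ls Lam : R).

Definition rotated_cost x u := ell x u - ls + lam x - lam (f x u).

Definition weighted_cost N x v := \sum_(0 <= t < N) (N - t)%:R * ell (traj f x v t) (v t).

Local Notation rc x v t := (rotated_cost (traj f x v t) (v t)).
Local Notation dlam x v t := (lam (traj f x v t.+1) - lam (traj f x v t)).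

Lemma Jbeta_weighted_cost N x v : Jbeta f ell N x v = weighted_cost N x v / N%:R.
Proof.
rewrite /Jbeta /weighted_cost /beta big_mkord mulr_suml.
by apply: eq_bigr => k _; rewrite mulrAC.
Qed.

Lemma weighted_costS N x v : weighted_cost N.+1 x v =
  N.+1%:R * ell x (v 0%N) + weighted_cost N (f x (v 0%N)) (fun t => v t.+1).
Proof.
rewrite /weighted_cost big_nat_recl // subn0; congr (_ + _).
by apply: eq_bigr => t _; rewrite subSS trajS.
Qed.

Lemma weighted_cost_tail x v k H :
  \sum_(k <= t < H) (H - t)%:R * ell (traj f x v t) (v t) =
  ls * \sum_(k <= t < H) (H - t)%:R + \sum_(k <= t < H) (H - t)%:R * rc x v t
  + \sum_(k <= t < H) (H - t)%:R * dlam x v t.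
Proof.
rewrite mulr_sumr -!big_split /=; apply: eq_bigr => t _.
rewrite /rotated_cost /=; ring.
Qed.

Lemma sum_cost_rotated x v a b : (a <= b)%N ->
  \sum_(a <= t < b) ell (traj f x v t) (v t) =
  (b - a)%:R * ls + \sum_(a <= t < b) rc x v t + (lam (traj f x v b) - lam (traj f x v a)).
Proof.
move=> ab; rewrite -(telescope_sumr (fun t => lam (traj f x v t)) ab).
rewrite mulr_natl -sumr_const_nat -!big_split /=.
by apply: eq_bigr => t _; rewrite /rotated_cost /=; ring.
Qed.

Lemma weighted_cost_head x v c k H : (forall t, (t < k)%N -> v t = c t) ->
  \sum_(0 <= t < k) (H - t)%:R * ell (traj f x v t) (v t) =
  \sum_(0 <= t < k) (H - t)%:R * ell (traj f x c t) (c t).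
Proof.
move=> vc; apply: eq_big_nat => t /andP[_ tk].
have -> : traj f x v t = traj f x c t.
  by apply: eq_traj => s st; rewrite vc // (ltn_trans st tk).
by rewrite vc.
Qed.

Lemma rotated_tail_le_of_cost_le x v c k H : (k <= H)%N ->
  (forall t, (t < k)%N -> v t = c t) ->
  (forall t, (k <= t <= H)%N -> `|lam (traj f x v t)| <= Lam) ->
  (forall t, (k <= t <= H)%N -> `|lam (traj f x c t)| <= Lam) ->
  weighted_cost H x v <= weighted_cost H x c ->
  \sum_(k <= t < H) (H - t)%:R * rc x v t <=
  \sum_(k <= t < H) (H - t)%:R * rc x c t + (H - k)%:R * (4 * Lam).
Proof.
move=> kH vc hv hc.
rewrite /weighted_cost !(big_cat_nat (leq0n k) kH) /= (weighted_cost_head _ _ vc).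
rewrite lerD2l !weighted_cost_tail.
have := weighted_telescope_norm_le kH hv; have := weighted_telescope_norm_le kH hc.
rewrite !ler_norml => /andP[? ?] /andP[? ?]; lra.
Qed.

Lemma weighted_cost_extension_le x v z k N : (k <= N)%N ->
  (forall t, (t < k)%N -> z t = v t) ->
  (forall t, (t < N)%N -> 0 <= rc x v t) ->
  (forall t, (t <= N)%N -> `|lam (traj f x v t)| <= Lam) ->
  (forall t, (t <= N.+1)%N -> `|lam (traj f x z t)| <= Lam) ->
  weighted_cost N.+1 x z <= weighted_cost N x v + N.+1%:R * ls
    + \sum_(0 <= t < N) rc x v t + \sum_(k <= t < N.+1) (N.+1 - t)%:R * rc x z t
    + (N.+1 - k)%:R * (4 * Lam).
Proof.
move=> kN zv v0 hv hz; have kN1 := leqW kN.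
rewrite /weighted_cost (big_cat_nat (leq0n k) kN1) (big_cat_nat (leq0n k) kN) /=.
rewrite (weighted_cost_head _ _ zv) !weighted_cost_tail.
have -> : \sum_(0 <= t < k) (N.+1 - t)%:R * ell (traj f x v t) (v t) =
    \sum_(0 <= t < k) (N - t)%:R * ell (traj f x v t) (v t)
    + \sum_(0 <= t < k) ell (traj f x v t) (v t).
  rewrite -big_split /=; apply: eq_big_nat => t /andP[_ tk].
  rewrite subSn; last exact: leq_trans (ltnW tk) kN.
  by rewrite -addn1 natrD mulrDl mul1r.
rewrite sum_cost_rotated // subn0.
have -> : \sum_(k <= t < N.+1) (N.+1 - t)%:R =
    \sum_(k <= t < N) (N - t)%:R + (N.+1 - k)%:R :> R.
  have := sum_weight_succ (fun=> 1 : R) kN; rewrite sumr_const_nat.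
  by under eq_bigr do rewrite mulr1; under [in RHS]eq_bigr do rewrite mulr1.
have ls_split : k%:R * ls + ls * (N.+1 - k)%:R = N.+1%:R * ls.
  by rewrite mulrC -mulrDr -natrD subnKC // mulrC.
have rc_head : \sum_(0 <= t < k) rc x v t <= \sum_(0 <= t < N) rc x v t.
  rewrite (big_cat_nat (leq0n k) kN) /= lerDl big_nat_cond.
  by apply: sumr_ge0 => t /andP[/andP[_ tN] _]; apply: v0.
have rc_tail : 0 <= \sum_(k <= t < N) (N - t)%:R * rc x v t.
  rewrite big_nat_cond; apply: sumr_ge0 => t /andP[/andP[_ tN] _].
  by rewrite mulr_ge0 ?ler0n ?v0.
have := weighted_telescope_norm_le kN1 (fun t h => hz t (proj2 (andP h))).
have := weighted_telescope_norm_le kN (fun t h => hv t (proj2 (andP h))).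
have := hv k kN; have := hv 0%N (leq0n N).
rewrite -ls_split !ler_norml subSn // -natr1; lra.
Qed.
End RotatedCost.

Section Orbits.
Variables (R : realType) (n m : nat).

Lemma dist_orbit_ge0 p (Pi : nat -> 'rV[R]_n * 'rV[R]_m) z : 0 <= dist_orbit p Pi z.
Proof.
rewrite /dist_orbit; elim/big_rec: _ => [|i y _ y0]; first by rewrite le_max normr_ge0.
by rewrite le_min y0 le_max normr_ge0.
Qed.

Lemma dist_orbit_le_near p (Pi : nat -> 'rV[R]_n * 'rV[R]_m) z e : (0 < p)%N ->
  dist_orbit p Pi z <= e -> exists2 i, (i < p)%N & `|z.1 - (Pi i).1| <= e.
Proof.
move=> p0; rewrite /dist_orbit.
set d := fun k => pnorm (z.1 - (Pi k).1, z.2 - (Pi k).2).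
have [i ip ->] : exists2 i, (i < p)%N & \big[Order.min/d 0%N]_(k < p) d k = d i.
  elim/big_rec: _ => [|k y _ [j jp ->]]; first by exists 0%N.
  by rewrite /Order.min; case: ifP => _; [exists k | exists j].
by move=> di; exists i => //; apply: le_trans di; rewrite /d /pnorm le_max lexx.
Qed.

Variables (f : 'rV[R]_n -> 'rV[R]_m -> 'rV[R]_n) (ell : 'rV[R]_n -> 'rV[R]_m -> R).
Variables (Xs : set 'rV[R]_n) (Us : set 'rV[R]_m) (lam : 'rV[R]_n -> R) (ls : R).

Lemma periodic_orbit_rotated_cost_le0 p Pi : periodic_orbit f Xs Us p Pi ->
  avg_cost ell p Pi = ls ->
  (forall x u, Xs x -> Us u -> Xs (f x u) -> 0 <= rotated_cost f ell lam ls x u) ->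
  forall j, (j < p)%N -> rotated_cost f ell lam ls (Pi j).1 (Pi j).2 <= 0.
Proof.
move=> [p0 [PiXU PiS]] avg rc0.
have rc_ge0 (j : 'I_p) : 0 <= rotated_cost f ell lam ls (Pi j).1 (Pi j).2.
  have [jX jU] := PiXU j (ltn_ord j).
  by apply: rc0; rewrite // -PiS //; apply: (PiXU _ _).1; rewrite ltn_mod.
have rc_sum : \sum_(j < p) rotated_cost f ell lam ls (Pi j).1 (Pi j).2 = 0.
  rewrite /rotated_cost.
  under eq_bigr => j _ do rewrite -PiS //.
  rewrite !big_split /= !sumrN (sum_ord_modS (fun j => lam (Pi j).1) p0) addrK.
  rewrite sumr_const card_ord -avg /avg_cost -mulrnAl -[p%:R^-1 *+ p]mulr_natr.
  by rewrite mulVf ?mul1r ?subrr // pnatr_eq0 -lt0n.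
move=> j jp.
by have /= -> := @psumr_eq0P _ _ predT _ (fun i _ => rc_ge0 i) rc_sum (Ordinal jp) isT.
Qed.

End Orbits.

Section Assumptions.
Variables (R : realType) (n m : nat).
Variables (f : 'rV[R]_n -> 'rV[R]_m -> 'rV[R]_n) (ell : 'rV[R]_n -> 'rV[R]_m -> R).
Variables (Xs : set 'rV[R]_n) (Us : set 'rV[R]_m) (ps : nat) (Pis : nat -> 'rV[R]_n * 'rV[R]_m).

Lemma A1_cost_bounded : A1 f ell Xs Us ->
  exists L, forall x u, Xs x -> Us u -> `|ell x u| <= L.
Proof.
case=> _ [ell_cont [cX cU]].
have [M [_ HM]] := compact_bounded (continuous_compact ell_cont (compact_setX cX cU)).
exists (M + 1) => x u xX uU.
by apply: (HM (M + 1)); [rewrite ltrDl | exists (x, u)].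
Qed.

Lemma A3_rotated_cost_ge0 : A3 f ell Xs Us ps Pis ->
  exists lam Lam, (forall x, Xs x -> `|lam x| <= Lam) /\
    forall x u, Xs x -> Us u -> Xs (f x u) ->
      0 <= rotated_cost f ell lam (ell_star f ell Xs Us) x u.
Proof.
move=> [lam [Lam [al [lam_bound [alK diss]]]]]; exists lam, Lam; split=> // x u xX uU fX.
exact: le_trans (Kinf_ge0 alK (dist_orbit_ge0 _ _ _)) (diss x u xX uU fX).
Qed.

Lemma A4_steer_to_orbit : periodic_orbit f Xs Us ps Pis -> A4 f Xs Us ps Pis ->
  exists kap M', 0 < kap /\ forall k x, (k < ps)%N -> Xs x -> `|x - (Pis k).1| <= kap ->
    exists2 r, Feas f Xs Us M' x r & traj f x r M' = (Pis k).1.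
Proof.
move=> [_ [PiXU _]] [kap [M' [rho [kap0 [_ ctrl]]]]]; exists kap, M'; split=> // k x kp xX xk.
have yk : `|(Pis k).1 - (Pis k).1| <= kap by rewrite subrr normr0 ltW.
by have [r [rF [rM _]]] := ctrl k x _ kp xX (PiXU k kp).1 xk yk; exists r.
Qed.

End Assumptions.

Section ValueFunction.
Variables (R : realType) (n m : nat).
Variables (f : 'rV[R]_n -> 'rV[R]_m -> 'rV[R]_n) (ell : 'rV[R]_n -> 'rV[R]_m -> R).
Variables (Xs : set 'rV[R]_n) (Us : set 'rV[R]_m).
Variables (N : nat) (x : 'rV[R]_n) (u z : nat -> 'rV[R]_m) (c : R).
Hypotheses (N_gt0 : (0 < N)%N) (u_opt : (Jbeta f ell N x u)%:E = Vbeta f ell Xs Us N x).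
Hypotheses (zF : Feas f Xs Us N.+1 x z)
  (z_cost : weighted_cost f ell N.+1 x z <= weighted_cost f ell N x u + N.+1%:R * c).

Lemma Vbeta_succ_le :
  (Vbeta f ell Xs Us N.+1 x <= (N%:R / N.+1%:R)%:E * Vbeta f ell Xs Us N x + c%:E)%E.
Proof.
apply: le_trans (ereal_inf_lbound (ex_intro2 _ _ z zF erefl)) _.
rewrite -u_opt -EFinM -EFinD lee_fin !Jbeta_weighted_cost.
have -> : N%:R / N.+1%:R * (weighted_cost f ell N x u / N%:R) + c =
    (weighted_cost f ell N x u + N.+1%:R * c) / N.+1%:R.
  by field; rewrite addrC natr1 !pnatr_eq0 -!lt0n N_gt0.
by rewrite ler_pM2r // invr_gt0 ltr0n.
Qed.

Lemma Vbeta_shift_le : z 0%N = u 0%N ->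
  (Vbeta f ell Xs Us N (f x (u 0%N)) <=
   Vbeta f ell Xs Us N x + (N.+1%:R / N%:R * (c - ell x (u 0%N)))%:E)%E.
Proof.
move=> z0; have := Feas_behead zF; rewrite z0 => zF'.
apply: le_trans (ereal_inf_lbound (ex_intro2 _ _ _ zF' erefl)) _.
rewrite -u_opt -EFinD lee_fin !Jbeta_weighted_cost.
have -> : weighted_cost f ell N (f x (u 0%N)) (fun t => z t.+1) =
    weighted_cost f ell N.+1 x z - N.+1%:R * ell x (u 0%N).
  by rewrite weighted_costS z0 addrAC subrr add0r.
have -> : weighted_cost f ell N x u / N%:R + N.+1%:R / N%:R * (c - ell x (u 0%N)) =
    (weighted_cost f ell N x u + N.+1%:R * c - N.+1%:R * ell x (u 0%N)) / N%:R.
  by field; rewrite pnatr_eq0 -lt0n.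
by rewrite ler_pM2r ?invr_gt0 ?ltr0n // lerD2r.
Qed.

End ValueFunction.

Section Turnpike.
Variables (R : realType) (n m : nat).
Variables (f : 'rV[R]_n -> 'rV[R]_m -> 'rV[R]_n) (ell : 'rV[R]_n -> 'rV[R]_m -> R).
Variables (Xs : set 'rV[R]_n) (Us : set 'rV[R]_m).
Variables (ps : nat) (Pis : nat -> 'rV[R]_n * 'rV[R]_m).
Variables (umin : nat -> 'rV[R]_n -> nat -> 'rV[R]_m).
Variables (lam : 'rV[R]_n -> R) (ls Lam L kap a : R) (M' : nat).

Local Notation rc := (rotated_cost f ell lam ls).
Local Notation Feas := (Feas f Xs Us).

Hypothesis PO : periodic_orbit f Xs Us ps Pis.
Hypothesis rc_orbit : forall j, (j < ps)%N -> rc (Pis j).1 (Pis j).2 <= 0.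
Hypothesis rc_ge0 : forall x u, Xs x -> Us u -> Xs (f x u) -> 0 <= rc x u.
Hypothesis ell_bound : forall x u, Xs x -> Us u -> `|ell x u| <= L.
Hypothesis lam_bound : forall x, Xs x -> `|lam x| <= Lam.
Hypothesis steer : forall k x, (k < ps)%N -> Xs x -> `|x - (Pis k).1| <= kap ->
  exists2 r, Feas M' x r & traj f x r M' = (Pis k).1.
Hypothesis umin_opt : is_minimizer_selection f ell Xs Us umin.
(* [a] stands for [alpha kap]. *)
Hypothesis a_gt0 : 0 < a.

Let rc_max := L + `|ls| + 2 * Lam.
(* Steering costs at most [M' * rc_max]; the storage boundary terms add [4 * Lam]. *)
Let tail_rate := M'%:R * rc_max + 4 * Lam.

Lemma rotated_cost_le x u : Xs x -> Us u -> Xs (f x u) -> rc x u <= rc_max.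
Proof.
move=> xX uU fX; have := ell_bound xX uU; have := lam_bound xX; have := lam_bound fX.
have := ler_norm (- ls); rewrite normrN /rotated_cost /rc_max !ler_norml.
move=> ? /andP[? ?] /andP[? ?] /andP[? ?]; lra.
Qed.

Lemma splice_continuation x v H0 k r i : Feas H0 x v -> (k <= H0)%N -> (i < ps)%N ->
  Feas M' (traj f x v k) r -> traj f (traj f x v k) r M' = (Pis i).1 ->
  let z := splice v r k M' Pis ps i in
  (forall H, Feas H x z) /\
  forall t, (k <= t)%N ->
    rc (traj f x z t) (z t) <= if (k <= t < k + M')%N then rc_max else 0.
Proof.
move=> [vU vX] kH0 ip [rU rX] rM z.
have [p0 [PiXU _]] := PO.
have PiX j : Xs (Pis (j %% ps)%N).1 by apply: (PiXU _ _).1; rewrite ltn_mod.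
have zU t : Us (z t).
  rewrite /z /splice; case: ifP => tk; first by apply: vU; apply: leq_trans tk kH0.
  case: ifP => tkM; last by apply: (PiXU _ _).2; rewrite ltn_mod.
  by apply: rU; rewrite ltn_subLR // leqNgt tk.
have z_orbit t : (k + M' <= t)%N ->
    traj f x z t = (Pis ((i + (t - (k + M'))) %% ps)%N).1.
  by move=> tkM; rewrite -{1}(subnKC tkM) (traj_splice_orbit _ PO ip rM).
have zX t : Xs (traj f x z t).
  have [tk|kt] := leqP t k.
    by rewrite traj_splice_head //; apply: vX; apply: leq_trans tk kH0.
  have [tkM|kMt] := leqP t (k + M'); last by rewrite z_orbit // ltnW.
  by rewrite -(subnKC (ltnW kt)) traj_splice_mid ?leq_subLR //; apply: rX; rewrite leq_subLR.
split=> [H|t kt]; first by split=> t _; [apply: zU | apply: zX].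
rewrite kt /=; case: ifP => [_|tkM].
  by apply: rotated_cost_le; [apply: zX | apply: zU | apply: (zX t.+1)].
have {}tkM : (k + M' <= t)%N by rewrite leqNgt tkM.
rewrite z_orbit // /z /splice ltnNge kt /= ltnNge tkM /=.
by apply: rc_orbit; rewrite ltn_mod.
Qed.

Lemma rc_max_ge0 : 0 <= rc_max.
Proof.
have [p0 [PiXU _]] := PO; have [X0 U0] := PiXU 0%N p0.
have := le_trans (normr_ge0 _) (ell_bound X0 U0).
have := le_trans (normr_ge0 _) (lam_bound X0); have := normr_ge0 ls.
rewrite /rc_max; lra.
Qed.

Lemma Lam_ge0 : 0 <= Lam.
Proof.
have [p0 [PiXU _]] := PO.
exact: le_trans (normr_ge0 _) (lam_bound (PiXU 0%N p0).1).
Qed.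

Lemma tail_rate_ge0 : 0 <= tail_rate.
Proof. by rewrite /tail_rate addr_ge0 ?mulr_ge0 ?ler0n ?rc_max_ge0 ?Lam_ge0. Qed.

Lemma orbit_continuation x v H0 k u0 : Feas H0 x v -> (k <= H0)%N ->
  dist_orbit ps Pis (traj f x v k, u0) <= kap ->
  exists z, [/\ forall t, (t < k)%N -> z t = v t, forall H, Feas H x z &
    forall H, \sum_(k <= t < H) (H - t)%:R * rc (traj f x z t) (z t) <=
              (H - k)%:R * (M'%:R * rc_max)].
Proof.
move=> vF kH0 near; have [p0 _] := PO.
have [i ip xi] := dist_orbit_le_near p0 near.
have [r rF rM] := steer ip (vF.2 k kH0) xi.
have [zF zrc] := splice_continuation vF kH0 ip rF rM.
exists (splice v r k M' Pis ps i); split=> // [t tk|H]; first by rewrite /splice tk.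
by apply: weighted_window_sum_le rc_max_ge0 _ => t /andP[kt _]; apply: zrc.
Qed.

Lemma weighted_cost_optimal N x z : (0 < N)%N -> Feas N x z ->
  weighted_cost f ell N x (umin N x) <= weighted_cost f ell N x z.
Proof.
move=> N0 zF; have [_ uJ] := umin_opt (ex_intro _ z zF).
have : (Vbeta f ell Xs Us N x <= (Jbeta f ell N x z)%:E)%E.
  by apply: ereal_inf_lbound; exists z.
by rewrite -uJ lee_fin !Jbeta_weighted_cost ler_pM2r // invr_gt0 ltr0n.
Qed.

Lemma lam_traj_bound H x v t : Feas H x v -> (t <= H)%N -> `|lam (traj f x v t)| <= Lam.
Proof. by move=> [_ vX] tH; apply/lam_bound/vX. Qed.

Lemma optimal_rotated_cost_bounds N x t : Feas N x !=set0 -> (t < N)%N ->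
  0 <= rc (traj f x (umin N x) t) (umin N x t) <= rc_max.
Proof.
move=> xF tN; have [[uU uX] _] := umin_opt xF.
have xt := uX t (ltnW tN); have ut := uU t tN; have fxt := uX t.+1 tN.
by rewrite rc_ge0 ?rotated_cost_le.
Qed.

Lemma optimal_rotated_sum_le N x k : Feas N x !=set0 -> (k < N)%N ->
  dist_orbit ps Pis (traj f x (umin N x) k, umin N x k) <= kap ->
  \sum_(0 <= t < N) rc (traj f x (umin N x) t) (umin N x t) <=
  k%:R * rc_max + Num.sqrt N%:R * (tail_rate + rc_max).
Proof.
move=> xF kN near; have [uF _] := umin_opt xF.
have [z [zu zF ztail]] := orbit_continuation uF (ltnW kN) near.
apply: sum_le_of_weighted_tail_le_sqrt (ltnW kN) rc_max_ge0 tail_rate_ge0 _ _.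
  by move=> t; apply: optimal_rotated_cost_bounds.
have := rotated_tail_le_of_cost_le ls (ltnW kN) (fun t tk => esym (zu t tk))
  (fun t h => lam_traj_bound uF (proj2 (andP h)))
  (fun t h => lam_traj_bound (zF N) (proj2 (andP h)))
  (weighted_cost_optimal (leq_ltn_trans (leq0n k) kN) (zF N)).
have := ztail N; have : ((N - k)%:R : R) <= N%:R by rewrite ler_nat leq_subr.
have := tail_rate_ge0; rewrite /tail_rate; nra.
Qed.

Lemma optimal_extension N x k : Feas N x !=set0 -> (k < N)%N ->
  dist_orbit ps Pis (traj f x (umin N x) k, umin N x k) <= kap ->
  exists z, [/\ Feas N.+1 x z, forall t, (t < k)%N -> z t = umin N x t &
    weighted_cost f ell N.+1 x z <= weighted_cost f ell N x (umin N x) + N.+1%:R * ls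
      + \sum_(0 <= t < N) rc (traj f x (umin N x) t) (umin N x t)
      + (N.+1 - k)%:R * tail_rate].
Proof.
move=> xF kN near; have [uF _] := umin_opt xF.
have [z [zu zF ztail]] := orbit_continuation uF (ltnW kN) near.
exists z; split=> //.
have := weighted_cost_extension_le (ltnW kN) zu
  (fun t tN => proj1 (andP (optimal_rotated_cost_bounds xF tN)))
  (fun t => lam_traj_bound uF) (fun t => lam_traj_bound (zF N.+1)).
have := ztail N.+1; rewrite /tail_rate; lra.
Qed.

Lemma turnpike_extension :
  exists2 C, 0 < C & forall x N, Feas N x !=set0 -> (a^-1 + 2) ^+ 2 < N%:R ->
    N%:R - Num.sqrt N%:R / a <= (Qcount f ps Pis umin kap N x)%:R ->
    exists z, [/\ Feas N.+1 x z, z 0%N = umin N x 0%N &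
      weighted_cost f ell N.+1 x z <=
      weighted_cost f ell N x (umin N x) + N.+1%:R * ls + (1 + Num.sqrt N%:R) * C].
Proof.
have rc_max0 := rc_max_ge0; have tail_rate0 := tail_rate_ge0.
have ai0 : 0 <= a^-1 by rewrite invr_ge0 ltW.
set C := (a^-1 + 1) * (rc_max + tail_rate) + 2 * tail_rate + 1.
have C0 : 0 <= (a^-1 + 1) * (rc_max + tail_rate) by apply: mulr_ge0; apply: addr_ge0.
exists C => [|x N xF Nbig near_count]; first by rewrite /C; lra.
set r := Num.sqrt (N%:R : R); have r0 : 0 <= r := sqrtr_ge0 _.
have Nr : N%:R = r * r by rewrite -expr2 sqr_sqrtr ?ler0n.
have r_big : a^-1 + 2 < r by move: Nbig; rewrite Nr expr2; nra.
have s_bound : r / a + 2 <= N%:R by rewrite Nr; nra.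
have [[k1 [k1N near1 k1b]] [k0 [/andP[k0_gt0 k0N] near0 k0b]]] :=
  count_iota_extremes near_count s_bound.
have rc_sum := optimal_rotated_sum_le xF k1N near1.
have [z [zF zu z_cost]] := optimal_extension xF k0N near0.
rewrite -/r in k1b k0b rc_sum; exists z; split=> //; first exact: zu k0_gt0.
have k1_cost : k1%:R * rc_max <= r / a * rc_max by apply: ler_wpM2r.
have k0_cost : (N.+1 - k0)%:R * tail_rate <= (r / a + 2) * tail_rate.
  apply: ler_wpM2r => //; rewrite natrB; last exact: leqW (ltnW k0N).
  by rewrite -natr1; lra.
have rC : r * ((a^-1 + 1) * (rc_max + tail_rate)) <= r * C.
  by apply: ler_wpM2l => //; rewrite /C; lra.
have tail_C : 2 * tail_rate <= C by rewrite /C; lra.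
lra.
Qed.

End Turnpike.

Theorem lemma25 (R : realType) (n m : nat)
  (f : 'rV[R]_n -> 'rV[R]_m -> 'rV[R]_n) (ell : 'rV[R]_n -> 'rV[R]_m -> R)
  (Xs : set 'rV[R]_n) (Us : set 'rV[R]_m)
  (ps : nat) (Pis : nat -> 'rV[R]_n * 'rV[R]_m)
  (umin : nat -> 'rV[R]_n -> nat -> 'rV[R]_m) (alpha : R -> R) :
  (forall x u, Xs x -> Us u -> 0 <= ell x u) ->
  periodic_orbit f Xs Us ps Pis ->
  avg_cost ell ps Pis = ell_star f ell Xs Us ->
  A1 f ell Xs Us ->
  A3 f ell Xs Us ps Pis ->
  A4 f Xs Us ps Pis ->
  is_minimizer_selection f ell Xs Us umin ->
  Kinf alpha ->
  exists (delta : R -> R) (N0 : nat), Lclass delta /\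
    forall x, Xturn f Xs Us ps Pis umin alpha N0 x ->
    forall N : nat, (N0 <= N)%N ->
      (Vbeta f ell Xs Us N.+1 x <=
         (N%:R / N.+1%:R)%:E * Vbeta f ell Xs Us N x
         + (ell_star f ell Xs Us + delta N.+1%:R)%:E)%E /\
      (Vbeta f ell Xs Us N (f x (umin N x 0%N)) <=
         Vbeta f ell Xs Us N x
         + (N.+1%:R / N%:R * (ell_star f ell Xs Us - ell x (umin N x 0%N)
                               + delta N.+1%:R))%:E)%E.
Proof.
move=> _ PO avg hA1 hA3 hA4 umin_opt alphaK.
have [L ell_bound] := A1_cost_bounded hA1.
have [lam [Lam [lam_bound rc_ge0]]] := A3_rotated_cost_ge0 hA3.
have [kap [M' [kap0 steer]]] := A4_steer_to_orbit PO hA4.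
have rc_orbit := periodic_orbit_rotated_cost_le0 PO avg rc_ge0.
have [C C0 extend] := turnpike_extension PO rc_orbit rc_ge0 ell_bound lam_bound steer
  umin_opt (Kinf_gt0 alphaK kap0).
exists (sqrt_decay (4 * C)), (Num.truncn (((alpha kap)^-1 + 2) ^+ 2)).+1.
split=> [|x [_ xT] N N0N]; first by apply: sqrt_decay_Lclass; rewrite mulr_gt0.
have [xF xQ] := xT N N0N; have [_ u_opt] := umin_opt N x xF.
have N_big : ((alpha kap)^-1 + 2) ^+ 2 < N%:R.
  by apply: lt_le_trans (truncnS_gt _) _; rewrite ler_nat.
have N_gt0 : (0 < N)%N by apply: leq_trans N0N.
have [z [zF z0 z_cost]] := extend x N xF N_big (xQ kap kap0).
have {}z_cost : weighted_cost f ell N.+1 x z <= weighted_cost f ell N x (umin N x)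
    + N.+1%:R * (ell_star f ell Xs Us + sqrt_decay (4 * C) N.+1%:R).
  by apply: le_trans z_cost _; rewrite mulrDr addrA lerD2l sqrt_decay_succ // ltW.
split; first exact: Vbeta_succ_le N_gt0 u_opt zF z_cost.
by rewrite addrAC; apply: Vbeta_shift_le N_gt0 u_opt zF z_cost z0.
Qed.
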